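(* Consider an instance of the Max-Buying-PL-Limited-$(\alpha,t)$ Problem (defined in the context). There is a non-negative integer $\ell$, whose value is bounded by a function that is linear in the length of the (binary) representation of the instance, such that there is an optimal solution in which the price of every item is at least $d_\ell$.
   Context: Items are $I=\{1,\dots,n\}$, bidders form a finite set $B$, $v=(v_{ib})$ is a non-negative integer valuation matrix and $C_i$ ($i\in I$) are non-negative integer capacities. For a rational $\alpha>1$, a positive integer $t$, and every integer $k\ge 0$, let $d_k=\max\{v_{ib}: i\in I,b\in B\}/\alpha^k$. The Max-Buying-PL-Limited-$(\alpha,t)$ Problem: choose prices $p_1\ge p_2\ge\dots\ge p_n$ with each $p_i\in\{d_0,d_1,\dots\}$, and an allocation, i.e. a set of item–bidder pairs $(i,b)$ (bidder $b$ receives a copy of $i$), such that each item $i$ is given to at most $C_i$ bidders, $p_i\le v_{ib}$ whenever $b$ receives $i$, and for every integer $r\ge 0$ each bidder receives at most one item whose price lies in $\{d_{rt},d_{rt+1},\dots,d_{(r+1)t-1}\}$ (a bidder may thus receive several items). The profit, to be maximized, is the sum over all allocated pairs $(i,b)$ of $p_i$. *)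

From HB Require Import structures.
From mathcomp Require Import all_boot all_order all_algebra.
Set Implicit Arguments. Unset Strict Implicit. Unset Printing Implicit Defensive.
Import Order.TTheory GRing.Theory Num.Theory.
Local Open Scope ring_scope.

Section MaxBuying.
Variables (n : nat) (B : finType) (v : 'I_n -> B -> nat) (C : 'I_n -> nat).
Variables (alpha : rat) (t : nat).

(* maximum valuation max_{i,b} v_{ib} (0 if there are no items/bidders) *)
Definition maxval : nat := (\max_(x : 'I_n * B) v x.1 x.2)%N.

Definition dprice (k : nat) : rat := (maxval%:R) / alpha ^+ k.

Definition in_block (r : nat) (x : rat) : bool :=
  [exists k : 'I_t, x == dprice (r * t + k)%N].

(* A solution: prices p : 'I_n -> rat and an allocation A (set of item-bidder
   pairs; (i,b) \in A means bidder b receives a copy of item i). *)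
Definition feasible (p : 'I_n -> rat) (A : {set 'I_n * B}) : Prop :=
  [/\ (forall i, exists k : nat, p i = dprice k),
      (forall i j : 'I_n, (i <= j)%N -> p j <= p i),
      (forall i, #|[set b | (i, b) \in A]| <= C i)%N,
      (forall i b, (i, b) \in A -> p i <= (v i b)%:R) &
      (forall (b : B) (r : nat),
         #|[set i | ((i, b) \in A) && in_block r (p i)]| <= 1)%N].

Definition profit (p : 'I_n -> rat) (A : {set 'I_n * B}) : rat :=
  \sum_(x in A) p x.1.

End MaxBuying.

Definition bitlen (m : nat) : nat := (trunc_log 2 m).+1.

(* Length of the binary representation of an instance (n, B, v, C);
   alpha and t are fixed parameters of the problem. *)
Definition inst_size (n : nat) (B : finType) (v : 'I_n -> B -> nat)
  (C : 'I_n -> nat) : nat :=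
  (bitlen n + bitlen #|B|
   + \sum_(i < n) (bitlen (C i) + \sum_(b : B) bitlen (v i b)))%N.

From HB Require Import structures.
From mathcomp Require Import all_boot all_order all_algebra.
From Stdlib Require Import ClassicalEpsilon FunctionalExtensionality.
Set Implicit Arguments. Unset Strict Implicit. Unset Printing Implicit Defensive.
Import Order.TTheory GRing.Theory Num.Theory.
Local Open Scope ring_scope.

(* Since maxval <= 2 ^ s for the instance size s and alpha ^ m >= 2 for a
   fixed m, the price d_R at level R = m s is at most 1, hence at most every
   positive valuation.  Renumbering the used blocks at or above R consecutively
   from R (keeping the offset inside each block) therefore only raises prices
   and preserves all constraints, and afterwards every level is below
   (R + n) t <= (m + 1) t s.  So some optimum is found among the finitely many
   solutions with levels below that bound, and it is optimal overall. *)

Lemma bernoulli_ineq (R : realDomainType) (a : R) (m : nat) :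
  1 <= a -> 1 + (a - 1) *+ m <= a ^+ m.
Proof.
move=> a_ge1; have a1_ge0 : 0 <= a - 1 by rewrite subr_ge0.
elim: m => [|m IHm]; first by rewrite mulr0n addr0 expr0.
have am_ge1 : 1 <= a ^+ m by rewrite exprn_ege1.
rewrite mulrSr addrA exprSr.
have -> : a ^+ m * a = a ^+ m + a ^+ m * (a - 1).
  by rewrite mulrBr mulr1 addrCA subrr addr0.
by rewrite lerD // -{1}[a - 1]mul1r ler_wpM2r.
Qed.

Lemma exists_expr_ge2 (R : archiRealFieldType) (a : R) :
  1 < a -> exists m, 2 <= a ^+ m.
Proof.
move=> a_gt1; have a1_gt0 : 0 < a - 1 by rewrite subr_gt0.
exists (Num.bound (a - 1)^-1); apply: le_trans (bernoulli_ineq _ (ltW a_gt1)).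
rewrite [2]mulr2n lerD2l -mulr_natr -ler_pdivrMl // mulr1.
by rewrite ltW // archi_boundP // invr_ge0 ltW.
Qed.

Lemma exists_argmax disp (R : orderType disp) (T : finType) (P : T -> Prop)
    (F : T -> R) :
  (exists x, P x) -> exists2 x, P x & forall y, P y -> (F y <= F x)%O.
Proof.
move=> [x0 Px0].
pose Pb x : bool := if excluded_middle_informative (P x) then true else false.
have PbP x : reflect (P x) (Pb x).
  by rewrite /Pb; case: excluded_middle_informative => h; constructor.
case: (@arg_maxP _ _ _ x0 Pb F (introT (PbP x0) Px0)) => x /PbP Px maxF.
by exists x => // y /PbP /maxF.
Qed.

Lemma nat_choice (I : Type) (P : I -> pred nat) :
  (forall i, exists k, P i k) -> exists f : I -> nat, forall i, P i (f i).
Proof.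
by move=> exP; exists (fun i => ex_minn (exP i)) => i; case: ex_minnP.
Qed.

Lemma sum_nat_eq_le1 (x a b : nat) : (\sum_(a <= q < b) (x == q) <= 1)%N.
Proof.
rewrite (eq_bigr (fun q => if q == x then 1 else 0)%N) => [|q _]; last first.
  by rewrite eq_sym; case: eqP.
rewrite -big_mkcond sum1_count.
by rewrite (count_uniq_mem _ (iota_uniq _ _)); case: (_ \in _).
Qed.

Section LevelCompression.
Local Open Scope nat_scope.

Variables (I : finType) (t R : nat) (k : I -> nat).
Hypothesis t_gt0 : 0 < t.

Local Notation blk i := (k i %/ t).

Definition block_used q := [exists i, blk i == q].

Definition compress_block q :=
  if q < R then q else R + \sum_(R <= q' < q) block_used q'.

Definition compress_level i := compress_block (blk i) * t + k i %% t.

Local Notation cb := compress_block.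
Local Notation cl := compress_level.

Lemma compress_block_le q : cb q <= q.
Proof.
rewrite /cb; case: ltnP => // Rq.
apply: (@leq_trans (R + \sum_(R <= q' < q) 1)).
  by rewrite leq_add2l leq_sum // => q' _; case: block_used.
by rewrite sum_nat_const_nat muln1 subnKC.
Qed.

Lemma compress_block_id q : q < R -> cb q = q.
Proof. by rewrite /cb => ->. Qed.

Lemma compress_block_ge q : R <= q -> R <= cb q.
Proof. by rewrite /cb ltnNge => ->; rewrite leq_addr. Qed.

Lemma compress_block_lt i q : blk i < q -> cb (blk i) < cb q.
Proof.
move=> ltiq; have [qR|Rq] := ltnP q R.
  by rewrite !compress_block_id // (ltn_trans ltiq).
have [iR|Ri] := ltnP (blk i) R.
  by rewrite compress_block_id //; apply: leq_trans iR (compress_block_ge Rq).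
rewrite /cb (ltnNge q) (ltnNge (blk i)) Rq Ri /= ltn_add2l.
have used_i : block_used (blk i) by apply/existsP; exists i.
rewrite [X in _ < X](@big_cat_nat _ _ _ (blk i)) ?(ltnW ltiq) //=.
by rewrite [X in _ < _ + X]big_ltn // used_i add1n addnS ltnS leq_addr.
Qed.

Lemma eq_compress_block i j : (cb (blk i) == cb (blk j)) = (blk i == blk j).
Proof.
apply/eqP/eqP => [eq_cb|-> //].
by case: (ltngtP (blk i) (blk j)) => // /compress_block_lt; rewrite eq_cb ltnn.
Qed.

Lemma compress_block_bound i : cb (blk i) < R + #|I|.
Proof.
have [iR|Ri] := ltnP (blk i) R; first by rewrite compress_block_id ?ltn_addr.
rewrite /cb (ltnNge (blk i)) Ri /= ltn_add2l.
apply: (@leq_trans (\sum_(j | j != i) 1).+1); last first.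
  by rewrite sum1_card cardC1 prednK //; apply/card_gt0P; exists i.
rewrite ltnS.
apply: (@leq_trans (\sum_(R <= q < blk i) \sum_(j | j != i) (blk j == q))).
  rewrite !big_nat leq_sum // => q /andP[_ ltqi].
  case: (boolP (block_used q)) => // /existsP[j /eqP eqjq].
  have ji : j != i by apply: contraTneq ltqi => <-; rewrite eqjq ltnn.
  by rewrite (bigD1 j) //= eqjq eqxx.
by rewrite exchange_big leq_sum // => j _; apply: sum_nat_eq_le1.
Qed.

Lemma compress_level_ltS i : cl i < (cb (blk i)).+1 * t.
Proof. by rewrite /cl mulSnr ltn_add2l ltn_pmod. Qed.

Lemma divn_compress_level i : cl i %/ t = cb (blk i).
Proof. by rewrite /cl divnMDl // (divn_small (ltn_pmod _ t_gt0)) addn0. Qed.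

Lemma compress_level_le i : cl i <= k i.
Proof.
rewrite /cl [leqRHS](divn_eq (k i) t) leq_add2r.
by rewrite leq_mul2r compress_block_le orbT.
Qed.

Lemma compress_level_lt i : cl i < (R + #|I|) * t.
Proof.
apply: leq_trans (compress_level_ltS i) _.
by rewrite leq_mul2r compress_block_bound orbT.
Qed.

Lemma compress_level_id i : k i < R * t -> cl i = k i.
Proof.
by rewrite -ltn_divLR // => iR; rewrite /cl compress_block_id // -divn_eq.
Qed.

Lemma compress_level_ge i : R * t <= k i -> R * t <= cl i.
Proof.
rewrite -leq_divRL // => Ri; apply: leq_trans (leq_addr _ _).
by rewrite leq_mul2r compress_block_ge ?orbT.
Qed.

Lemma compress_level_mono i j : k i <= k j -> cl i <= cl j.
Proof.
move=> kij; have := leq_div2r t kij.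
rewrite leq_eqVlt => /orP[/eqP eq_blk|lt_blk].
  move: kij; rewrite (divn_eq (k i) t) (divn_eq (k j) t) eq_blk leq_add2l.
  by rewrite /cl eq_blk leq_add2l.
apply: ltnW (leq_trans (compress_level_ltS i) _).
by apply: leq_trans (leq_addr _ _); rewrite leq_mul2r compress_block_lt ?orbT.
Qed.

Lemma eqn_compress_level_div i j :
  (cl i %/ t == cl j %/ t) = (blk i == blk j).
Proof. by rewrite !divn_compress_level eq_compress_block. Qed.

End LevelCompression.

Section Prices.
Variables (n : nat) (B : finType) (v : 'I_n -> B -> nat) (alpha : rat).
Hypothesis alpha_gt1 : 1 < alpha.

Local Notation d := (dprice v alpha).

Lemma alpha_gt0 : 0 < alpha. Proof. exact: lt_trans ltr01 alpha_gt1. Qed.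

Lemma dprice_leq a b : (a <= b)%N -> d b <= d a.
Proof.
move=> le_ab; rewrite /dprice ler_wpM2l ?ler0n //.
by rewrite lef_pV2 ?posrE ?exprn_gt0 ?alpha_gt0 // ler_eXn2l.
Qed.

Hypothesis maxval_gt0 : (0 < maxval v)%N.

Lemma dprice_gt0 k : 0 < d k.
Proof. by rewrite divr_gt0 ?ltr0n // exprn_gt0 // alpha_gt0. Qed.

Lemma dprice_lt a b : (a < b)%N -> d b < d a.
Proof.
move=> lt_ab; rewrite /dprice ltr_pM2l ?ltr0n //.
by rewrite ltf_pV2 ?posrE ?exprn_gt0 ?alpha_gt0 // ltr_eXn2l.
Qed.

Lemma ler_dprice a b : (d b <= d a) = (a <= b)%N.
Proof. by case: leqP => [/dprice_leq -> //|/dprice_lt /lt_geF]. Qed.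

Lemma dprice_inj : injective d.
Proof. by move=> a b /eqP; rewrite eq_le !ler_dprice -eqn_leq => /eqP. Qed.

Lemma in_block_dprice t r k :
  (0 < t)%N -> in_block v alpha t r (d k) = (k %/ t == r)%N.
Proof.
move=> t_gt0; apply/existsP/eqP => [[j /eqP /dprice_inj ->]|<-].
  by rewrite divnMDl // divn_small ?addn0.
by exists (Ordinal (ltn_pmod k t_gt0)); rewrite /= -divn_eq.
Qed.

End Prices.

Lemma leq_sum_term (I : finType) (F : I -> nat) j : (F j <= \sum_i F i)%N.
Proof. by rewrite (bigD1 j) //= leq_addr. Qed.

Section InstanceSize.
Variables (n : nat) (B : finType) (v : 'I_n -> B -> nat) (C : 'I_n -> nat).
Local Open Scope nat_scope.

Lemma leq_inst_size : n <= inst_size v C.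
Proof.
rewrite /inst_size; apply: leq_trans _ (leq_addl _ _).
apply: (@leq_trans (\sum_(i < n) 1)).
  by rewrite sum_nat_const card_ord muln1.
by apply: leq_sum => i _; rewrite /bitlen addSn.
Qed.

Lemma bitlen_le_inst_size i b : bitlen (v i b) <= inst_size v C.
Proof.
rewrite /inst_size; apply: leq_trans _ (leq_addl _ _).
apply: leq_trans _ (leq_sum_term _ i); apply: leq_trans _ (leq_addl _ _).
exact: leq_sum_term.
Qed.

Lemma maxval_le_exp2 : maxval v <= 2 ^ inst_size v C.
Proof.
apply/bigmax_leqP => x _; apply: ltnW (leq_trans (@trunc_log_ltn 2 _ isT) _).
by rewrite leq_exp2l //; apply: bitlen_le_inst_size.
Qed.

Lemma dprice_inst_size_le1 (alpha : rat) m :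
  (1 < alpha)%R -> (2 <= alpha ^+ m)%R ->
  (dprice v alpha (m * inst_size v C) <= 1)%R.
Proof.
move=> alpha_gt1 alpha_m_ge2; have alpha_gt0 := alpha_gt0 alpha_gt1.
rewrite /dprice ler_pdivrMr ?exprn_gt0 // mul1r exprM.
apply: (@le_trans _ _ (2 ^ inst_size v C)%:R).
  by rewrite ler_nat maxval_le_exp2.
by rewrite natrX lerXn2r // nnegrE exprn_ge0 // ltW.
Qed.

End InstanceSize.

Section Compression.
Variables (n : nat) (B : finType) (v : 'I_n -> B -> nat) (C : 'I_n -> nat).
Variables (alpha : rat) (t : nat).
Hypotheses (alpha_gt1 : 1 < alpha) (t_gt0 : (0 < t)%N).

Local Notation d := (dprice v alpha).
Local Notation feasible := (feasible v C alpha t).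

Lemma feasible_set0 : feasible (fun=> d 0) set0.
Proof.
split=> [i|i j _|i|i b|b r] //; first by exists 0%N.
- by rewrite (_ : [set _ | _] = set0) ?cards0 //; apply/setP => b; rewrite !inE.
- by rewrite inE.
- by rewrite (_ : [set _ | _] = set0) ?cards0 //; apply/setP => i; rewrite !inE.
Qed.

Lemma ler_profit (p p' : 'I_n -> rat) (A : {set 'I_n * B}) :
  (forall i, p i <= p' i) -> profit p A <= profit p' A.
Proof. by move=> le_pp'; apply: ler_sum => x _; apply: le_pp'. Qed.

Variable R : nat.
Hypothesis dpriceR_le1 : d R <= 1.

Lemma feasible_compress_level (k : 'I_n -> nat) A : (0 < maxval v)%N ->
  feasible (fun i => d (k i)) A ->
  feasible (fun i => d (compress_level t R k i)) A.
Proof.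
move=> maxval_gt0 [_ mono cap val block]; split => //.
- by move=> i; exists (compress_level t R k i).
- move=> i j le_ij; apply: (dprice_leq v alpha_gt1).
  apply: compress_level_mono => //.
  by rewrite -(ler_dprice alpha_gt1 maxval_gt0); apply: mono.
- move=> i b /val dk_le_v; have [small|large] := ltnP (k i) (R * t).
    by rewrite compress_level_id.
  have v_ge1 : 1 <= (v i b)%:R :> rat.
    by rewrite ler1n -(ltr0n rat) (lt_le_trans (dprice_gt0 _ _ _) dk_le_v).
  apply: le_trans v_ge1; apply: le_trans dpriceR_le1.
  apply: (dprice_leq v alpha_gt1).
  by apply: leq_trans (compress_level_ge t_gt0 large); rewrite leq_pmulr.
- move=> b r; rewrite leqNgt; apply/negP => /card_gt1P[i [j []]].
  rewrite !inE !in_block_dprice // => /andP[iA /eqP ri] /andP[jA /eqP rj] ij.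
  have := block b (k i %/ t)%N; rewrite leqNgt => /negP; apply; apply/card_gt1P.
  exists i, j; rewrite !inE !in_block_dprice // iA jA eqxx.
  by rewrite -(@eqn_compress_level_div _ t R k t_gt0) ri rj eqxx.
Qed.

Lemma feasible_compress p A : feasible p A ->
  exists f : 'I_n -> nat, [/\ forall i, (f i < (R + n) * t)%N,
    feasible (fun i => d (f i)) A & forall i, p i <= d (f i)].
Proof.
move=> feas; have /nat_choice[k pk] : forall i, exists k, p i == d k.
  by case: feas => exP _ _ _ _ i; have [k ->] := exP i; exists k.
have p_k : p = fun i => d (k i).
  by apply: functional_extensionality => i; apply/eqP.
subst p.
case: (posnP (maxval v)) => [maxval0|maxval_gt0].
  have d0 j : d j = 0 by rewrite /dprice maxval0 mul0r.
  exists (fun=> 0%N); split=> [i||i]; last by rewrite !d0.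
    by rewrite muln_gt0 t_gt0 ltn_addl // (leq_ltn_trans _ (ltn_ord i)).
  suff <- : (fun i => d (k i)) = fun=> d 0 by [].
  by apply: functional_extensionality => i; rewrite !d0.
exists (compress_level t R k); split.
- by move=> i; rewrite -[X in (_ < (_ + X) * _)%N]card_ord compress_level_lt.
- exact: feasible_compress_level.
- by move=> i; apply: (dprice_leq v alpha_gt1); apply: compress_level_le.
Qed.

End Compression.

Theorem lemma13 (alpha : rat) (t : nat) (halpha : 1 < alpha) (ht : (0 < t)%N) :
  exists c1 c2 : nat,
  forall (n : nat) (B : finType) (v : 'I_n -> B -> nat) (C : 'I_n -> nat),
  exists l : nat,
    (l <= c1 * inst_size v C + c2)%N /\
    exists (p : 'I_n -> rat) (A : {set 'I_n * B}),
      [/\ feasible v C alpha t p A,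
          (forall i, dprice v alpha l <= p i) &
          (forall (p' : 'I_n -> rat) (A' : {set 'I_n * B}),
             feasible v C alpha t p' A' -> profit p' A' <= profit p A)].
Proof.
have [m alpha_m_ge2] := exists_expr_ge2 halpha.
exists (m.+1 * t)%N, 0%N => n B v C.
set s := inst_size v C; set R := (m * s)%N; set L := ((R + n) * t)%N.
exists L; split.
  by rewrite addn0 mulnAC leq_mul2r mulSnr leq_add2l leq_inst_size orbT.
pose price (f : {ffun 'I_n -> 'I_L}) i := dprice v alpha (f i).
pose P (x : {ffun 'I_n -> 'I_L} * {set 'I_n * B}) :=
  feasible v C alpha t (price x.1) x.2.
have compress p A : feasible v C alpha t p A ->
    exists2 x, P x & profit p A <= profit (price x.1) x.2.
  have dR_le1 := dprice_inst_size_le1 v C halpha alpha_m_ge2.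
  case/(feasible_compress halpha ht dR_le1) => f [f_lt feas_f le_pf].
  pose ff := [ffun i => Ordinal (f_lt i)].
  have price_f : price ff = fun i => dprice v alpha (f i).
    by apply: functional_extensionality => i; rewrite /price ffunE.
  by exists (ff, A); rewrite /P /= price_f // ler_profit.
have [x0 Px0 _] := compress _ _ (feasible_set0 v C alpha t).
have [x Px x_opt] :=
  exists_argmax (fun x => profit (price x.1) x.2) (ex_intro P x0 Px0).
exists (price x.1), x.2; split => // [i|p' A' /compress[y /x_opt le_yx le_py]].
  by apply: (dprice_leq v halpha); apply: ltnW.
exact: le_trans le_py le_yx.
Qed.
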